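(* Let $\theta\in\mathbb{R}$, $k>0$, $\sigma\ge0$, and consider on $\mathbb{R}^2$ $$\dot\xi=-\big(z+k+\sigma(\theta+z)^2\big)\xi,\qquad \dot z=\xi^2,$$ with output $y=\xi$. Then the system is forward complete, Lagrange and Lyapunov stable (with respect to the full state), every point $(0,z)$ is an equilibrium, and the system is GAOS with respect to the output $\xi$. However, when $\sigma=0$ the system is not UGAOS: there is no $T>0$ such that $|\xi(t)|\le 1/2$ for all $t\ge T$ and all initial conditions with $|(\xi_0,z_0)|\le\sqrt{1+(k+1)^2}$. *)

From Stdlib Require Import Reals.
From Coquelicot Require Import Coquelicot.
Open Scope R_scope.

Definition nrm2 (a b : R) : R := sqrt (a ^ 2 + b ^ 2).

(* A (forward) solution on [0, +oo) of
     xi' = -(z + k + sigma (theta + z)^2) xi,   z' = xi^2.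
   The functions are R -> R; only their values on [0,+oo) matter:
   the ODE holds at every t > 0 and the solution is right-continuous at 0. *)
Definition is_sol (theta k sigma : R) (xi z : R -> R) : Prop :=
  (forall t, 0 < t ->
     is_derive xi t (- (z t + k + sigma * (theta + z t) ^ 2) * xi t) /\
     is_derive z t (xi t ^ 2)) /\
  (forall eps, 0 < eps -> exists d, 0 < d /\
     forall t, 0 <= t < d -> Rabs (xi t - xi 0) < eps /\ Rabs (z t - z 0) < eps).

(* Forward completeness: from every initial condition there is a solution
   defined on the whole of [0,+oo) (the vector field is smooth, so
   solutions are unique and this says maximal solutions are global). *)
Definition forward_complete (theta k sigma : R) : Prop :=
  forall xi0 z0, exists xi z, is_sol theta k sigma xi z /\ xi 0 = xi0 /\ z 0 = z0.

Definition lagrange_stable (theta k sigma : R) : Prop :=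
  forall xi z, is_sol theta k sigma xi z ->
    exists M, forall t, 0 <= t -> nrm2 (xi t) (z t) <= M.

Definition lyapunov_stable (theta k sigma : R) : Prop :=
  forall eps, 0 < eps -> exists delta, 0 < delta /\
    forall xi z, is_sol theta k sigma xi z -> nrm2 (xi 0) (z 0) < delta ->
      forall t, 0 <= t -> nrm2 (xi t) (z t) < eps.

Definition is_equilibrium (theta k sigma : R) (xi0 z0 : R) : Prop :=
  is_sol theta k sigma (fun _ => xi0) (fun _ => z0).

Definition output_stable (theta k sigma : R) : Prop :=
  forall eps, 0 < eps -> exists delta, 0 < delta /\
    forall xi z, is_sol theta k sigma xi z -> nrm2 (xi 0) (z 0) < delta ->
      forall t, 0 <= t -> Rabs (xi t) < eps.

Definition output_attractive (theta k sigma : R) : Prop :=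
  forall xi z, is_sol theta k sigma xi z -> is_lim xi p_infty 0.

Definition GAOS (theta k sigma : R) : Prop :=
  output_stable theta k sigma /\ output_attractive theta k sigma.

(* The energy [V = xi^2/2 + F z], with [F z = z^2/2 + k z + sigma (theta + z)^3/3], is conserved along
   solutions, since [F'] is exactly the damping coefficient, while [z] is nondecreasing because
   [z' = xi^2].  [F] is coercive from the right and grows at rate at least [k/2] near the origin,
   which gives boundedness and stability.  Being monotone and bounded, [z] converges, so
   [xi^2 = 2 (V - F z)] converges too, and its limit must vanish or [z] would grow without bound.
   Existence reduces, through the energy, to the scalar equation [z' = 2 (V - F z)], solved by
   inverting [t = \int dz / (2 (V - F z))], which diverges at the first zero of the integrand's
   denominator.  For [sigma = 0], the orbits [xi = sech (t - T)], [z = tanh (t - T) - k] all start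
   in the prescribed ball and satisfy [xi T = 1]. *)

From Stdlib Require Import Reals Lra Psatz ClassicalEpsilon Ranalysis5.
From Coquelicot Require Import Coquelicot.
Open Scope R_scope.

(** * Right continuity at the initial time and monotonicity *)

Definition right_cont0 (f : R -> R) : Prop :=
  forall eps, 0 < eps -> exists d, 0 < d /\ forall t, 0 <= t < d -> Rabs (f t - f 0) < eps.

Lemma continuity_pt_ball f x : continuity_pt f x ->
  forall eps, 0 < eps -> exists d, 0 < d /\ forall y, Rabs (y - x) < d -> Rabs (f y - f x) < eps.
Proof.
  intros Hf eps Heps; destruct (Hf eps Heps) as [d [Hd Hball]]; exists d; split; [exact Hd|].
  intros y Hy; destruct (Req_dec y x) as [->|Hyx].
  - rewrite Rminus_eq_0, Rabs_R0; exact Heps.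
  - apply (Hball y); split; [split; [exact I|auto]|exact Hy].
Qed.

Lemma is_derive_continuity_pt (f : R -> R) x l : is_derive f x l -> continuity_pt f x.
Proof.
  intros Hf; apply derivable_continuous_pt; exists l; apply is_derive_Reals; exact Hf.
Qed.

Lemma continuity_pt_right_cont0 f : continuity_pt f 0 -> right_cont0 f.
Proof.
  intros Hf eps Heps; destruct (continuity_pt_ball _ _ Hf eps Heps) as [d [Hd Hball]].
  exists d; split; [exact Hd|]; intros t Ht; apply Hball.
  rewrite Rminus_0_r, Rabs_right; lra.
Qed.

Lemma right_cont0_comp f h : right_cont0 f -> continuity_pt h (f 0) -> right_cont0 (fun t => h (f t)).
Proof.
  intros Hf Hh eps Heps; destruct (continuity_pt_ball _ _ Hh eps Heps) as [d1 [Hd1 Hball]].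
  destruct (Hf d1 Hd1) as [d [Hd Hnear]]; exists d; split; auto.
Qed.

Lemma right_cont0_plus f g : right_cont0 f -> right_cont0 g -> right_cont0 (fun t => f t + g t).
Proof.
  intros Hf Hg eps Heps.
  destruct (Hf (eps / 2)) as [d1 [Hd1 Hnear1]]; [lra|].
  destruct (Hg (eps / 2)) as [d2 [Hd2 Hnear2]]; [lra|].
  exists (Rmin d1 d2); split; [apply Rmin_pos; auto|]; intros t Ht.
  pose proof (Rmin_l d1 d2); pose proof (Rmin_r d1 d2).
  specialize (Hnear1 t ltac:(lra)); specialize (Hnear2 t ltac:(lra)).
  revert Hnear1 Hnear2; unfold Rabs; repeat destruct Rcase_abs; lra.
Qed.

Lemma right_cont0_le f c T : right_cont0 f -> 0 < T ->
  (forall t, 0 < t < T -> f t <= c) -> f 0 <= c.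
Proof.
  intros Hf HT Hle; destruct (Rle_lt_dec (f 0) c) as [Hc|Hc]; [exact Hc|].
  destruct (Hf (f 0 - c)) as [d [Hd Hnear]]; [lra|].
  set (t := Rmin d T / 2).
  assert (0 < Rmin d T) by (apply Rmin_pos; auto).
  pose proof (Rmin_l d T); pose proof (Rmin_r d T).
  specialize (Hnear t ltac:(unfold t; lra)); specialize (Hle t ltac:(unfold t; lra)).
  revert Hnear; unfold Rabs; destruct Rcase_abs; lra.
Qed.

Lemma mvt_is_derive (f df : R -> R) a b : a < b ->
  (forall x, a <= x <= b -> continuity_pt f x) ->
  (forall x, a < x < b -> is_derive f x (df x)) ->
  exists c, a <= c <= b /\ f b - f a = df c * (b - a).
Proof.
  intros Hab Hcont Hder; destruct (MVT_gen f a b df) as [c [Hc Hmvt]];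
    rewrite ?Rmin_left, ?Rmax_right in *; try lra; auto.
  exists c; auto.
Qed.

Lemma nondecreasing_of_derive_nonneg (f df : R -> R) :
  (forall t, 0 < t -> is_derive f t (df t)) -> (forall t, 0 < t -> 0 <= df t) ->
  right_cont0 f -> forall s t, 0 <= s <= t -> f s <= f t.
Proof.
  intros Hder Hpos Hf.
  assert (Hpos_le : forall s t, 0 < s -> s <= t -> f s <= f t).
  { intros s t Hs Hst; destruct (Req_dec s t) as [->|Hne]; [lra|].
    destruct (mvt_is_derive f df s t) as [c [Hc Hmvt]]; try lra.
    - intros x Hx; apply (is_derive_continuity_pt _ _ (df x)), Hder; lra.
    - intros x Hx; apply Hder; lra.
    - pose proof (Hpos c ltac:(lra)); nra. }
  intros s t [Hs Hst]; destruct (Req_dec s 0) as [->|Hs0]; [|apply Hpos_le; lra].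
  destruct (Req_dec t 0) as [->|Ht0]; [lra|].
  apply (right_cont0_le _ _ t); auto; [lra|]; intros u Hu; apply Hpos_le; lra.
Qed.

Lemma const_of_derive_zero (f : R -> R) : (forall t, 0 < t -> is_derive f t 0) -> right_cont0 f ->
  forall t, 0 <= t -> f t = f 0.
Proof.
  intros Hder Hf t Ht; apply Rle_antisym.
  - assert (Hopp : - f 0 <= - f t); [|lra].
    apply (nondecreasing_of_derive_nonneg (fun t => - f t) (fun _ => 0)).
    + intros u Hu; pose proof (is_derive_opp f u 0 (Hder u Hu)) as Hopp.
      replace 0 with (opp (0 : R)) by apply Ropp_0; exact Hopp.
    + intros; lra.
    + refine (right_cont0_comp f (fun x => - x) Hf _).
      apply (is_derive_continuity_pt _ _ (-1)); auto_derive; auto.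
    + lra.
  - apply (nondecreasing_of_derive_nonneg f (fun _ => 0)); [exact Hder|intros; lra|exact Hf|lra].
Qed.

(** * Scalar autonomous equations, by inverting a primitive *)

Section PrimitiveInverse.

Variables (G f : R -> R) (c z0 b : R).
Hypothesis Hcz0 : c < z0.
Hypothesis Hz0b : z0 < b.
Hypothesis G_derive : forall w, c < w < b -> is_derive G w (f w).
Hypothesis f_pos : forall w, c < w < b -> 0 < f w.
Hypothesis G_z0 : G z0 = 0.
Hypothesis G_unbounded : forall t, exists w, z0 <= w < b /\ t < G w.

Lemma prim_continuous w : c < w < b -> continuity_pt G w.
Proof. intros Hw; exact (is_derive_continuity_pt _ _ _ (G_derive w Hw)). Qed.

Lemma prim_increasing u v : c < u -> u < v -> v < b -> G u < G v.
Proof.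
  intros Hu Huv Hv; destruct (mvt_is_derive G f u v) as [x [Hx Hmvt]]; [lra| | |].
  - intros x Hx; apply prim_continuous; lra.
  - intros x Hx; apply G_derive; lra.
  - pose proof (f_pos x ltac:(lra)); nra.
Qed.

Lemma prim_onto t : 0 <= t -> exists w, z0 <= w < b /\ G w = t.
Proof.
  intros Ht; destruct (Req_dec t 0) as [->|Ht0]; [exists z0; split; [lra|exact G_z0]|].
  destruct (G_unbounded t) as [w1 [Hw1 Htw1]].
  assert (Hzw1 : z0 < w1) by (destruct (Req_dec z0 w1) as [<-|]; lra).
  destruct (IVT_interv (fun w => G w - t) z0 w1) as [w [Hw Hroot]]; [| |lra|lra|].
  - intros a Ha; apply continuity_pt_minus; [apply prim_continuous; lra|].
    apply continuity_pt_const; intros ? ?; reflexivity.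
  - exact Hzw1.
  - exists w; split; [lra|simpl in Hroot; lra].
Qed.

Definition prim_inv (t : R) : R := epsilon (inhabits z0) (fun w => z0 <= w < b /\ G w = t).

Lemma prim_inv_spec t : 0 <= t -> z0 <= prim_inv t < b /\ G (prim_inv t) = t.
Proof. intros Ht; unfold prim_inv; apply epsilon_spec, prim_onto, Ht. Qed.

Lemma prim_inv_le s t : 0 <= s <= t -> prim_inv s <= prim_inv t.
Proof.
  intros Hst; destruct (prim_inv_spec s ltac:(lra)) as [Hs HGs].
  destruct (prim_inv_spec t ltac:(lra)) as [Ht HGt].
  apply Rnot_lt_le; intros Hlt.
  pose proof (prim_increasing (prim_inv t) (prim_inv s) ltac:(lra) Hlt ltac:(lra)); lra.
Qed.

Lemma prim_inv_0 : prim_inv 0 = z0.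
Proof.
  destruct (prim_inv_spec 0 (Rle_refl 0)) as [H0 HG0].
  destruct (Req_dec (prim_inv 0) z0) as [|Hne]; [assumption|].
  pose proof (prim_increasing z0 (prim_inv 0) Hcz0 ltac:(lra) ltac:(lra)); lra.
Qed.

Lemma prim_inv_continuous t : 0 < t -> continuity_pt prim_inv t.
Proof.
  intros Ht; set (ub := prim_inv (t + 1)).
  destruct (prim_inv_spec (t + 1) ltac:(lra)) as [Hub HGub]; fold ub in Hub, HGub.
  assert (Hz0ub : z0 < ub) by (destruct (Req_dec z0 ub) as [E|]; [rewrite <- E in HGub|]; lra).
  apply (continuity_pt_recip_interv G prim_inv z0 ub Hz0ub).
  - intros x y Hx Hxy Hy; apply prim_increasing; lra.
  - intros x Hx Hxub; rewrite G_z0 in Hx; apply prim_inv_spec, Hx.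
  - intros x Hx Hxub; rewrite G_z0 in Hx; rewrite HGub in Hxub.
    split; [apply prim_inv_spec, Hx|apply prim_inv_le; lra].
  - intros a Ha; apply prim_continuous; lra.
  - rewrite G_z0, HGub; lra.
Qed.

Lemma prim_inv_derive t : 0 < t -> is_derive prim_inv t (/ f (prim_inv t)).
Proof.
  intros Ht.
  destruct (prim_inv_spec t ltac:(lra)) as [Hw HGw].
  destruct (prim_inv_spec (t / 2) ltac:(lra)) as [Hlb _].
  destruct (prim_inv_spec (t + 1) ltac:(lra)) as [Hub _].
  assert (Hder : forall a, prim_inv (t / 2) <= a <= prim_inv (t + 1) -> derivable_pt G a).
  { intros a Ha; exists (f a); apply is_derive_Reals, G_derive; lra. }
  assert (Hmono : prim_inv (t / 2) <= prim_inv t <= prim_inv (t + 1))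
    by (split; apply prim_inv_le; lra).
  assert (HGinv : forall x, t / 2 <= x <= t + 1 -> comp G prim_inv x = id x)
    by (intros x Hx; unfold comp, id; apply prim_inv_spec; lra).
  assert (Hderiv : derive_pt G (prim_inv t) (Hder (prim_inv t) Hmono) = f (prim_inv t))
    by (apply derive_pt_eq_0, is_derive_Reals, G_derive; lra).
  pose proof (f_pos (prim_inv t) ltac:(lra)) as Hf.
  pose proof (derivable_pt_lim_recip_interv G prim_inv (t / 2) (t + 1) t Hder
    (prim_inv_continuous t Ht) ltac:(lra) ltac:(lra) Hmono HGinv
    ltac:(rewrite Hderiv; lra)) as Hlim.
  rewrite Hderiv in Hlim; apply is_derive_Reals.
  replace (/ f (prim_inv t)) with (1 / f (prim_inv t)) by (field; lra); exact Hlim.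
Qed.

Lemma prim_inv_right_cont0 : right_cont0 prim_inv.
Proof.
  intros eps Heps; pose proof (Rmin_l (z0 + eps / 2) ((z0 + b) / 2)).
  pose proof (Rmin_r (z0 + eps / 2) ((z0 + b) / 2)).
  set (w := Rmin (z0 + eps / 2) ((z0 + b) / 2)) in *.
  assert (z0 < w) by (apply Rmin_glb_lt; lra).
  exists (G w); split; [rewrite <- G_z0; apply prim_increasing; lra|]; intros t Ht.
  destruct (prim_inv_spec t ltac:(lra)) as [Hinv HGinv].
  assert (prim_inv t < w).
  { apply Rnot_le_lt; intros Hle; destruct (Req_dec w (prim_inv t)) as [E|]; [rewrite <- E in HGinv; lra|].
    pose proof (prim_increasing w (prim_inv t) ltac:(lra) ltac:(lra) ltac:(lra)); lra. }
  rewrite prim_inv_0, Rabs_right; lra.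
Qed.

End PrimitiveInverse.

Lemma is_derive_RInt_open (f : R -> R) c b a w : c < a < b ->
  (forall u, c < u < b -> continuity_pt f u) -> c < w < b ->
  is_derive (fun w => RInt f a w) w (f w).
Proof.
  intros Ha Hf Hw; apply (is_derive_RInt f _ a w).
  - pose proof (Rmin_l (w - c) (b - w)); pose proof (Rmin_r (w - c) (b - w)).
    assert (Hr : 0 < Rmin (w - c) (b - w)) by (apply Rmin_pos; lra).
    exists (mkposreal _ Hr); intros y Hy; change (Rabs (y - w) < Rmin (w - c) (b - w)) in Hy.
    apply Rabs_def2 in Hy.
    apply (RInt_correct (V := R_CompleteNormedModule)), (ex_RInt_continuous (V := R_CompleteNormedModule)).
    intros x Hx; apply continuity_pt_filterlim, Hf.
    pose proof (Rmin_l a y); pose proof (Rmin_r a y); pose proof (Rmax_l a y); pose proof (Rmax_r a y).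
    split; [apply Rlt_le_trans with (Rmin a y); [apply Rmin_glb_lt|]|
            apply Rle_lt_trans with (Rmax a y); [|apply Rmax_lub_lt]]; lra.
  - apply continuity_pt_filterlim, Hf, Hw.
Qed.

(* [G - ln (b - w) / L] is nondecreasing, and [- ln (b - w)] blows up as [w] tends to [b]. *)
Lemma unbounded_of_derive_ge_inv_dist (G f : R -> R) c z0 b L : c < z0 < b -> 0 < L ->
  (forall w, c < w < b -> is_derive G w (f w)) ->
  (forall w, z0 <= w < b -> / (L * (b - w)) <= f w) ->
  forall t, exists w, z0 <= w < b /\ G z0 + t < G w.
Proof.
  intros Hz0 HL HG Hf t.
  set (H w := G w + ln (b - w) / L).
  assert (HH : forall w, c < w < b -> is_derive H w (f w - / (L * (b - w)))).
  { intros w Hw; unfold H; apply (is_derive_plus G (fun w => ln (b - w) / L)); [exact (HG w Hw)|].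
    auto_derive; [lra|field; split; lra]. }
  assert (Hmono : forall w, z0 <= w < b -> H z0 <= H w).
  { intros w Hw; destruct (Req_dec z0 w) as [->|Hne]; [lra|].
    destruct (mvt_is_derive H (fun w => f w - / (L * (b - w))) z0 w) as [x [Hx Hmvt]]; [lra| | |].
    - intros x Hx; apply (is_derive_continuity_pt _ _ _ (HH x ltac:(lra))).
    - intros x Hx; apply HH; lra.
    - pose proof (Hf x ltac:(lra)); nra. }
  set (e := exp (- (L * (Rabs t + 1)))); pose proof (Rabs_pos t); pose proof (Rle_abs t).
  assert (He : 0 < e) by apply exp_pos.
  assert (He1 : e < 1) by (rewrite <- exp_0; apply exp_increasing; nra).
  exists (b - (b - z0) * e); split; [split; nra|].
  specialize (Hmono (b - (b - z0) * e) ltac:(split; nra)); unfold H in Hmono.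
  replace (b - (b - (b - z0) * e)) with ((b - z0) * e) in Hmono by ring.
  rewrite ln_mult in Hmono by lra; unfold e in Hmono; rewrite ln_exp in Hmono; fold e in Hmono.
  replace ((ln (b - z0) + - (L * (Rabs t + 1))) / L) with (ln (b - z0) / L - (Rabs t + 1))
    in Hmono by (field; lra).
  lra.
Qed.

(* Solves [z' = g z], [z 0 = z0] by inverting [t = \int_{z0}^{z} du / g u]; the bound [g u <= L (b - u)]
   makes the integral diverge before [z] reaches the zero [b]. *)
Lemma scalar_flow (g : R -> R) z0 b L : z0 < b -> 0 < L ->
  (forall u, continuity_pt g u) -> (forall u, z0 <= u < b -> 0 < g u) ->
  (forall u, z0 <= u < b -> g u <= L * (b - u)) ->
  exists zs, zs 0 = z0 /\ (forall t, 0 < t -> is_derive zs t (g (zs t))) /\ right_cont0 zs /\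
    (forall t, 0 <= t -> z0 <= zs t < b).
Proof.
  intros Hz0b HL Hg Hpos Hlip; pose proof (Hpos z0 ltac:(lra)) as Hgz0.
  destruct (continuity_pt_ball g z0 (Hg z0) (g z0 / 2)) as [d [Hd Hball]]; [lra|].
  set (c := z0 - d / 2).
  assert (Hpos_near : forall u, c < u < b -> 0 < g u).
  { intros u Hu; destruct (Rlt_le_dec u z0); [|apply Hpos; lra].
    specialize (Hball u ltac:(rewrite Rabs_left; unfold c in Hu; lra)).
    apply Rabs_def2 in Hball; lra. }
  set (G := fun w => RInt (fun u => / g u) z0 w).
  assert (HG : forall w, c < w < b -> is_derive G w (/ g w)).
  { intros w Hw; apply (is_derive_RInt_open (fun u => / g u) c b); [unfold c; lra| |exact Hw].
    intros u Hu; apply continuity_pt_inv; [apply Hg|specialize (Hpos_near u Hu); lra]. }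
  assert (Hinv_pos : forall w, c < w < b -> 0 < / g w)
    by (intros w Hw; apply Rinv_0_lt_compat, Hpos_near, Hw).
  assert (HG0 : G z0 = 0) by (unfold G; rewrite RInt_point; reflexivity).
  assert (Hunb : forall t, exists w, z0 <= w < b /\ t < G w).
  { intros t; destruct (unbounded_of_derive_ge_inv_dist G (fun w => / g w) c z0 b L
      ltac:(unfold c; lra) HL HG) with (t := t) as [w [Hw HGw]].
    - intros w Hw; apply Rinv_le_contravar; [apply Hpos, Hw|apply Hlip, Hw].
    - exists w; split; [exact Hw|lra]. }
  assert (Hcz0 : c < z0) by (unfold c; lra).
  exists (prim_inv G z0 b); split; [|split; [|split]].
  - exact (prim_inv_0 G _ c z0 b Hcz0 Hz0b HG Hinv_pos HG0 Hunb).
  - intros t Ht; rewrite <- (Rinv_inv (g (prim_inv G z0 b t))).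
    exact (prim_inv_derive G _ c z0 b Hcz0 Hz0b HG Hinv_pos HG0 Hunb t Ht).
  - exact (prim_inv_right_cont0 G _ c z0 b Hcz0 Hz0b HG Hinv_pos HG0 Hunb).
  - intros t Ht; apply (prim_inv_spec G _ c z0 b Hcz0 Hz0b HG HG0 Hunb t Ht).
Qed.

Lemma first_zero_above (g : R -> R) z0 M : (forall u, continuity_pt g u) ->
  0 < g z0 -> z0 <= M -> g M < 0 ->
  exists b, z0 < b /\ g b = 0 /\ forall u, z0 <= u < b -> 0 < g u.
Proof.
  intros Hg Hz0 HM HgM.
  set (P w := z0 <= w /\ forall u, z0 <= u <= w -> 0 < g u).
  assert (Pz0 : P z0) by (split; [lra|intros u Hu; replace u with z0 by lra; exact Hz0]).
  destruct (completeness P) as [b [Hb_ub Hb_lub]].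
  - exists M; intros w [Hw Hpos]; apply Rnot_lt_le; intros HMw.
    pose proof (Hpos M ltac:(lra)); lra.
  - exists z0; exact Pz0.
  - pose proof (Hb_ub z0 Pz0) as Hz0b.
    assert (Hpos : forall u, z0 <= u < b -> 0 < g u).
    { intros u Hu; apply NNPP; intros Hgu; assert (b <= u); [|lra].
      apply Hb_lub; intros w [Hw Hposw]; apply Rnot_lt_le; intros Huw.
      apply Hgu, Hposw; lra. }
    assert (Hgb : g b = 0).
    { destruct (Rtotal_order (g b) 0) as [Hneg|[Hzero|Hgt]]; [exfalso| |exfalso]; auto.
      - destruct (continuity_pt_ball g b (Hg b) (- g b)) as [d [Hd Hball]]; [lra|].
        destruct (Req_dec b z0) as [->|Hbz0]; [lra|].
        pose proof (Rmax_l z0 (b - d / 2)); pose proof (Rmax_r z0 (b - d / 2)).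
        set (u := Rmax z0 (b - d / 2)) in *.
        assert (u < b) by (apply Rmax_lub_lt; lra).
        specialize (Hball u ltac:(rewrite Rabs_left; lra)); apply Rabs_def2 in Hball.
        pose proof (Hpos u ltac:(lra)); lra.
      - destruct (continuity_pt_ball g b (Hg b) (g b)) as [d [Hd Hball]]; [lra|].
        assert (b + d / 2 <= b); [|lra].
        apply Hb_ub; split; [lra|]; intros u Hu.
        destruct (Rlt_le_dec u b); [apply Hpos; lra|].
        specialize (Hball u ltac:(rewrite Rabs_right; lra)); apply Rabs_def2 in Hball; lra. }
    exists b; split; [destruct (Req_dec z0 b) as [<-|]; lra|split; assumption].
Qed.

(** * Energy, bounds and stability *)

Definition damping (th k s z : R) : R := z + k + s * (th + z) ^ 2.
Definition potential (th k s z : R) : R := z ^ 2 / 2 + k * z + s * (th + z) ^ 3 / 3.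
Definition energy (th k s x z : R) : R := x ^ 2 / 2 + potential th k s z.
(* The value of [xi ^ 2] on the energy level [E] at height [z = w]. *)
Definition energy_level (th k s E w : R) : R := 2 * (E - potential th k s w).

Section System.

Variables th k s : R.
Hypothesis Hk : 0 < k.
Hypothesis Hs : 0 <= s.

Lemma potential_derive z : is_derive (potential th k s) z (damping th k s z).
Proof. unfold potential, damping; auto_derive; auto; field. Qed.

Lemma potential_continuous z : continuity_pt (potential th k s) z.
Proof. exact (is_derive_continuity_pt _ _ _ (potential_derive z)). Qed.

Lemma le_of_potential_le E w : potential th k s w <= E -> w <= Rabs th + 2 * Rabs E + 1.
Proof.
  intros HE; pose proof (Rle_abs E); pose proof (Rabs_pos E); pose proof (Rabs_pos th).
  destruct (Rle_lt_dec w (Rabs th + 1)) as [Hw|Hw]; [lra|].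
  assert (- th <= Rabs th) by (rewrite <- Rabs_Ropp; apply Rle_abs).
  assert (0 <= s * (th + w) ^ 3 / 3).
  { assert (0 <= (th + w) ^ 3) by (apply pow_le; lra).
    apply Rmult_le_pos; [apply Rmult_le_pos|]; lra. }
  unfold potential in HE; assert (w ^ 2 / 2 >= w / 2) by nra; nra.
Qed.

(* For [z >= -k/2] the slope [damping] of the potential is at least [k/2]. *)
Lemma potential_increment_ge z0 w : - k / 2 <= z0 -> z0 <= w ->
  k / 2 * (w - z0) <= potential th k s w - potential th k s z0.
Proof.
  intros Hz0 Hw; set (p := th + w); set (q := th + z0).
  replace (potential th k s w - potential th k s z0)
    with ((w - z0) * ((w + z0) / 2 + k + s / 3 * (p ^ 2 + p * q + q ^ 2)))
    by (unfold potential, p, q; field).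
  rewrite (Rmult_comm (k / 2)); apply Rmult_le_compat_l; [lra|].
  assert (0 <= s / 3 * (p ^ 2 + p * q + q ^ 2)) by (apply Rmult_le_pos; nra); lra.
Qed.

Lemma is_sol_intro xi z :
  (forall t, 0 < t -> is_derive xi t (- damping th k s (z t) * xi t)) ->
  (forall t, 0 < t -> is_derive z t (xi t ^ 2)) ->
  right_cont0 xi -> right_cont0 z -> is_sol th k s xi z.
Proof.
  intros Hxi Hz Hrxi Hrz; split; [intros t Ht; split; auto|].
  intros eps Heps; destruct (Hrxi eps Heps) as [d1 [Hd1 Hnear1]].
  destruct (Hrz eps Heps) as [d2 [Hd2 Hnear2]].
  exists (Rmin d1 d2); split; [apply Rmin_pos; auto|]; intros t Ht.
  pose proof (Rmin_l d1 d2); pose proof (Rmin_r d1 d2).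
  split; [apply Hnear1|apply Hnear2]; lra.
Qed.

Section Solution.

Variables xi z : R -> R.
Hypothesis Hsol : is_sol th k s xi z.

Let zmax := Rabs th + 2 * Rabs (energy th k s (xi 0) (z 0)) + 1.

Lemma sol_derive_xi t : 0 < t -> is_derive xi t (- damping th k s (z t) * xi t).
Proof. intros Ht; exact (proj1 (proj1 Hsol t Ht)). Qed.

Lemma sol_derive_z t : 0 < t -> is_derive z t (xi t ^ 2).
Proof. intros Ht; exact (proj2 (proj1 Hsol t Ht)). Qed.

Lemma sol_right_cont0_xi : right_cont0 xi.
Proof.
  intros eps Heps; destruct (proj2 Hsol eps Heps) as [d [Hd Hnear]].
  exists d; split; [exact Hd|]; intros t Ht; apply Hnear, Ht.
Qed.

Lemma sol_right_cont0_z : right_cont0 z.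
Proof.
  intros eps Heps; destruct (proj2 Hsol eps Heps) as [d [Hd Hnear]].
  exists d; split; [exact Hd|]; intros t Ht; apply Hnear, Ht.
Qed.

Lemma sol_energy t : 0 <= t -> energy th k s (xi t) (z t) = energy th k s (xi 0) (z 0).
Proof.
  apply (const_of_derive_zero (fun t => energy th k s (xi t) (z t))).
  - clear t; intros t Ht; unfold energy.
    replace 0 with (- damping th k s (z t) * xi t * xi t + xi t ^ 2 * damping th k s (z t))
      by ring.
    apply (is_derive_plus (fun t => xi t ^ 2 / 2) (fun t => potential th k s (z t))).
    + apply (is_derive_comp (fun x => x ^ 2 / 2) xi t); [auto_derive; auto; field|].
      exact (sol_derive_xi t Ht).
    + exact (is_derive_comp _ z t _ _ (potential_derive (z t)) (sol_derive_z t Ht)).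
  - apply right_cont0_plus.
    + refine (right_cont0_comp xi (fun x => x ^ 2 / 2) sol_right_cont0_xi _).
      apply (is_derive_continuity_pt _ _ (xi 0)); auto_derive; auto; field.
    + exact (right_cont0_comp z _ sol_right_cont0_z (potential_continuous (z 0))).
Qed.

Lemma sol_z_nondecreasing a b : 0 <= a <= b -> z a <= z b.
Proof.
  apply (nondecreasing_of_derive_nonneg z (fun t => xi t ^ 2)).
  - exact sol_derive_z.
  - intros t _; apply pow2_ge_0.
  - exact sol_right_cont0_z.
Qed.

Lemma sol_z_bounds t : 0 <= t -> z 0 <= z t <= zmax.
Proof.
  intros Ht; split; [apply sol_z_nondecreasing; lra|].
  apply le_of_potential_le; rewrite <- (sol_energy t Ht); unfold energy.
  pose proof (pow2_ge_0 (xi t)); lra.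
Qed.

Lemma sol_xi2_bounded : exists K, forall t, 0 <= t -> xi t ^ 2 <= K.
Proof.
  destruct (continuity_ab_min (potential th k s) (z 0) zmax) as [zmin [Hmin _]].
  - apply (sol_z_bounds 0); lra.
  - intros w _; apply potential_continuous.
  - exists (2 * (energy th k s (xi 0) (z 0) - potential th k s zmin)); intros t Ht.
    rewrite <- (sol_energy t Ht); unfold energy.
    pose proof (Hmin (z t) (sol_z_bounds t Ht)); lra.
Qed.

Lemma sol_bounded : exists M, forall t, 0 <= t -> nrm2 (xi t) (z t) <= M.
Proof.
  destruct sol_xi2_bounded as [K HK].
  exists (sqrt (K + z 0 ^ 2 + zmax ^ 2)); intros t Ht; apply sqrt_le_1_alt.
  pose proof (HK t Ht); pose proof (sol_z_bounds t Ht) as Hz.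
  assert (z t ^ 2 <= z 0 ^ 2 + zmax ^ 2); [|lra].
  destruct (Rle_lt_dec 0 (z t)); nra.
Qed.

(* [z] is nondecreasing and bounded, hence converges; by conservation of energy so does [xi^2]. *)
Lemma sol_xi2_converges : exists c, forall d, 0 < d ->
  exists T, 0 <= T /\ forall t, T <= t -> Rabs (xi t ^ 2 - c) < d.
Proof.
  set (E := energy th k s (xi 0) (z 0)).
  destruct (completeness (fun y => exists t, 0 <= t /\ y = z t)) as [S [HS_ub HS_lub]].
  - exists zmax; intros y [t [Ht ->]]; apply (sol_z_bounds t Ht).
  - exists (z 0), 0; split; [lra|reflexivity].
  - exists (2 * (E - potential th k s S)); intros d Hd.
    destruct (continuity_pt_ball _ _ (potential_continuous S) (d / 2)) as [eta [Heta Hball]];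
      [lra|].
    assert (HT : exists T, 0 <= T /\ S - eta < z T).
    { apply NNPP; intros Hno; assert (S <= S - eta); [|lra].
      apply HS_lub; intros y [t [Ht ->]]; apply Rnot_lt_le; intros Hlt; apply Hno.
      exists t; auto. }
    destruct HT as [T [HT HzT]]; exists T; split; [exact HT|]; intros t Ht.
    assert (Hzt : S - eta < z t <= S).
    { pose proof (sol_z_nondecreasing T t (conj HT Ht)).
      split; [lra|apply HS_ub; exists t; split; [lra|reflexivity]]. }
    pose proof (sol_energy t ltac:(lra)) as HE; fold E in HE; unfold energy in HE.
    specialize (Hball (z t) ltac:(rewrite Rabs_left1; lra)); apply Rabs_def2 in Hball.
    apply Rabs_def1; lra.
Qed.

Lemma sol_xi2_not_eventually_ge m T : 0 < m -> ~ (forall t, T <= t -> m <= xi t ^ 2).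
Proof.
  intros Hm Hge.
  pose proof (Rmax_l T 1); pose proof (Rmax_r T 1).
  set (T1 := Rmax T 1) in *; set (L := (zmax - z 0) / m + 1).
  pose proof (sol_z_bounds 0 (Rle_refl 0)) as Hz0.
  assert (HL : m * L = zmax - z 0 + m) by (unfold L; field; lra).
  assert (0 < L) by (apply Rmult_lt_reg_l with m; lra).
  destruct (mvt_is_derive z (fun t => xi t ^ 2) T1 (T1 + L)) as [c [Hc Hmvt]]; [lra| | |].
  - intros x Hx; apply (is_derive_continuity_pt _ _ _ (sol_derive_z x ltac:(lra))).
  - intros x Hx; apply sol_derive_z; lra.
  - pose proof (Hge c ltac:(lra)).
    pose proof (sol_z_bounds (T1 + L) ltac:(lra)) as HzL.
    pose proof (sol_z_bounds T1 ltac:(lra)) as HzT.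
    nra.
Qed.

Lemma sol_xi_lim : is_lim xi p_infty 0.
Proof.
  destruct sol_xi2_converges as [c Hc].
  apply is_lim_spec; intros [eps Heps]; simpl.
  destruct (Rlt_le_dec c (eps * eps / 2)) as [Hsmall|Hlarge].
  - destruct (Hc (eps * eps / 2)) as [T [HT Hnear]]; [nra|].
    exists T; intros t Ht; specialize (Hnear t ltac:(lra)); apply Rabs_def2 in Hnear.
    rewrite Rminus_0_r; unfold Rabs; destruct Rcase_abs; nra.
  - exfalso; destruct (Hc (c / 2)) as [T [HT Hnear]]; [nra|].
    apply (sol_xi2_not_eventually_ge (c / 2) T); [nra|].
    intros t Ht; specialize (Hnear t Ht); apply Rabs_def2 in Hnear; lra.
Qed.

End Solution.

Lemma sys_lagrange_stable : lagrange_stable th k s.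
Proof. intros xi z Hsol; exact (sol_bounded xi z Hsol). Qed.

(* By conservation of energy, [xi t ^ 2 <= xi 0 ^ 2] and [k/2 (z t - z 0) <= xi 0 ^ 2 / 2]. *)
Lemma sys_lyapunov_stable : lyapunov_stable th k s.
Proof.
  intros eps Heps; pose proof (Rmin_l (k / 2) (eps / 3)); pose proof (Rmin_r (k / 2) (eps / 3)).
  set (d := Rmin (k / 2) (eps / 3)) in *.
  assert (Hd : 0 < d) by (apply Rmin_pos; lra).
  exists d; split; [exact Hd|]; intros xi z Hsol Hinit t Ht; unfold nrm2 in *.
  rewrite <- (sqrt_pow2 d) in Hinit by lra; apply sqrt_lt_0_alt in Hinit.
  rewrite <- (sqrt_pow2 eps) by lra; apply sqrt_lt_1_alt; split; [nra|].
  pose proof (sol_energy xi z Hsol t Ht) as HE; unfold energy in HE.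
  pose proof (sol_z_nondecreasing xi z Hsol 0 t (conj (Rle_refl 0) Ht)).
  assert (Hz0 : - d < z 0 < d) by (split; nra).
  pose proof (potential_increment_ge (z 0) (z t) ltac:(lra) ltac:(lra)).
  pose proof (pow2_ge_0 (xi t)).
  assert (Hxi : xi t ^ 2 <= xi 0 ^ 2) by nra.
  assert (Hz : k * (z t - z 0) <= d * k / 2) by nra.
  assert (z t - z 0 <= d / 2) by (apply Rmult_le_reg_l with k; nra).
  assert (z t ^ 2 <= (3 / 2 * d) ^ 2) by nra.
  nra.
Qed.

Lemma sys_output_stable : output_stable th k s.
Proof.
  intros eps Heps; destruct (sys_lyapunov_stable eps Heps) as [d [Hd Hstab]].
  exists d; split; [exact Hd|]; intros xi z Hsol Hinit t Ht.
  eapply Rle_lt_trans; [|exact (Hstab xi z Hsol Hinit t Ht)].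
  rewrite <- sqrt_Rsqr_abs; apply sqrt_le_1_alt; unfold Rsqr.
  pose proof (pow2_ge_0 (z t)); simpl; lra.
Qed.

Lemma sys_output_attractive : output_attractive th k s.
Proof. intros xi z Hsol; exact (sol_xi_lim xi z Hsol). Qed.

Lemma sys_equilibrium z0 : is_equilibrium th k s 0 z0.
Proof.
  split.
  - intros t _; split; auto_derive; auto; ring.
  - intros eps Heps; exists 1; split; [lra|]; intros t _.
    rewrite !Rminus_eq_0, Rabs_R0; auto.
Qed.

(** * Existence of global solutions *)

Lemma energy_level_derive E w : is_derive (energy_level th k s E) w (- 2 * damping th k s w).
Proof. unfold energy_level, potential, damping; auto_derive; auto; field. Qed.

Lemma energy_level_continuous E w : continuity_pt (energy_level th k s E) w.
Proof. exact (is_derive_continuity_pt _ _ _ (energy_level_derive E w)). Qed.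

Lemma energy_level_le_dist E z0 b : z0 < b -> energy_level th k s E b = 0 ->
  exists L, 0 < L /\ forall u, z0 <= u < b -> energy_level th k s E u <= L * (b - u).
Proof.
  intros Hz0b Hb.
  destruct (continuity_ab_maj (damping th k s) z0 b) as [zM [HzM _]]; [lra| |].
  { intros x _; apply (is_derive_continuity_pt _ _ (1 + 2 * s * (th + x))).
    unfold damping; auto_derive; auto; ring. }
  pose proof (Rabs_pos (damping th k s zM)); pose proof (Rle_abs (damping th k s zM)).
  exists (2 * Rabs (damping th k s zM) + 1); split; [lra|]; intros u Hu.
  destruct (mvt_is_derive (energy_level th k s E) (fun w => - 2 * damping th k s w) u b)
    as [x [Hx Hmvt]]; [lra| | |].
  - intros x _; apply energy_level_continuous.
  - intros x _; apply energy_level_derive.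
  - pose proof (HzM x ltac:(lra)); rewrite Hb in Hmvt; nra.
Qed.

(* On the energy level of [(x0, z0)], the solution's [z]-component solves [z' = energy_level z]. *)
Lemma energy_level_flow x0 z0 : x0 <> 0 ->
  exists zs, zs 0 = z0 /\
    (forall t, 0 < t -> is_derive zs t (energy_level th k s (energy th k s x0 z0) (zs t))) /\
    right_cont0 zs /\ (forall t, 0 <= t -> 0 < energy_level th k s (energy th k s x0 z0) (zs t)).
Proof.
  intros Hx0; set (E := energy th k s x0 z0); set (g := energy_level th k s E).
  pose proof (pow2_gt_0 x0 Hx0).
  assert (Hgz0 : g z0 = x0 ^ 2) by (unfold g, energy_level, E, energy; field).
  set (M := Rabs th + 2 * Rabs E + 1 + 1).
  assert (HgM : g M < 0).
  { apply Rnot_le_lt; intros HgM.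
    assert (M <= Rabs th + 2 * Rabs E + 1); [|unfold M in *; lra].
    apply le_of_potential_le; unfold g, energy_level in HgM; lra. }
  assert (Hz0M : z0 <= M).
  { assert (z0 <= Rabs th + 2 * Rabs E + 1); [|unfold M; lra].
    apply le_of_potential_le; unfold E, energy; lra. }
  destruct (first_zero_above g z0 M (energy_level_continuous E) ltac:(lra) Hz0M HgM)
    as [b [Hz0b [Hb Hpos]]].
  destruct (energy_level_le_dist E z0 b Hz0b Hb) as [L [HL Hlip]].
  destruct (scalar_flow g z0 b L Hz0b HL (energy_level_continuous E) Hpos Hlip)
    as [zs [Hzs0 [Hder [Hrc Hrange]]]].
  exists zs; split; [exact Hzs0|split; [exact Hder|split; [exact Hrc|]]].
  intros t Ht; apply Hpos, Hrange, Ht.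
Qed.

(* The [xi]-component is recovered from the energy, with the sign of [x0]. *)
Lemma sys_forward_complete : forward_complete th k s.
Proof.
  intros x0 z0; destruct (Req_dec x0 0) as [->|Hx0].
  { exists (fun _ => 0), (fun _ => z0); split; [apply sys_equilibrium|auto]. }
  destruct (energy_level_flow x0 z0 Hx0) as [zs [Hzs0 [Hder [Hrc Hpos]]]].
  set (g := energy_level th k s (energy th k s x0 z0)) in *.
  pose proof (Rabs_pos_lt x0 Hx0) as Habs.
  set (sg := x0 / Rabs x0).
  assert (Hsg : sg * sg = 1).
  { assert (Habs2 : Rabs x0 * Rabs x0 = x0 * x0)
      by (rewrite <- Rabs_mult; apply Rabs_right; nra).
    unfold sg; replace (x0 / Rabs x0 * (x0 / Rabs x0)) with (x0 * x0 / (Rabs x0 * Rabs x0))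
      by (field; lra).
    rewrite Habs2; field; nra. }
  assert (Hsqrt : forall t, 0 <= t -> sqrt (g (zs t)) * sqrt (g (zs t)) = g (zs t))
    by (intros t Ht; apply sqrt_sqrt; pose proof (Hpos t Ht); lra).
  assert (Hxi_derive : forall w, 0 < g w ->
    is_derive (fun w => sg * sqrt (g w)) w (sg * (- 2 * damping th k s w / (2 * sqrt (g w)))))
    by (intros w Hw; apply is_derive_scal, is_derive_sqrt; [apply energy_level_derive|exact Hw]).
  exists (fun t => sg * sqrt (g (zs t))), zs; split; [apply is_sol_intro|split].
  - intros t Ht; pose proof (Hpos t ltac:(lra)) as Hgt; pose proof (sqrt_lt_R0 _ Hgt).
    pose proof (is_derive_comp _ zs t _ _ (Hxi_derive (zs t) Hgt) (Hder t Ht)) as Hxi.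
    replace (- damping th k s (zs t) * (sg * sqrt (g (zs t))))
      with (g (zs t) * (sg * (- 2 * damping th k s (zs t) / (2 * sqrt (g (zs t))))));
      [exact Hxi|].
    rewrite <- (Hsqrt t) at 1 by lra; field; lra.
  - intros t Ht; cbv beta; replace ((sg * sqrt (g (zs t))) ^ 2) with (g (zs t));
      [exact (Hder t Ht)|].
    replace ((sg * sqrt (g (zs t))) ^ 2) with (sg * sg * (sqrt (g (zs t)) * sqrt (g (zs t))))
      by ring.
    rewrite Hsg, Hsqrt by lra; ring.
  - refine (right_cont0_comp zs (fun w => sg * sqrt (g w)) Hrc _).
    exact (is_derive_continuity_pt _ _ _ (Hxi_derive (zs 0) (Hpos 0 (Rle_refl 0)))).
  - exact Hrc.
  - simpl; rewrite Hzs0.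
    replace (g z0) with (x0 ^ 2) by (unfold g, energy_level, energy; field).
    rewrite <- (pow2_abs x0), sqrt_pow2 by apply Rabs_pos; unfold sg; field; lra.
  - exact Hzs0.
Qed.

End System.

(** * Non-uniform output attractivity for [sigma = 0] *)

(* For every [T], the time-shifted heteroclinic orbit [xi = sech (t - T)], [z = tanh (t - T) - k]
   starts in the prescribed ball and has [xi T = 1]. *)
Lemma not_uniformly_output_attractive th k : 0 < k ->
  ~ (exists T, 0 < T /\
       forall xi z, is_sol th k 0 xi z -> nrm2 (xi 0) (z 0) <= sqrt (1 + (k + 1) ^ 2) ->
       forall t, T <= t -> Rabs (xi t) <= 1 / 2).
Proof.
  intros Hk [T [HT Hunif]].
  set (xi t := 2 * exp (t - T) / (exp (t - T) ^ 2 + 1)).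
  set (z t := (exp (t - T) ^ 2 - 1) / (exp (t - T) ^ 2 + 1) - k).
  assert (Hxi : forall t, is_derive xi t (- (z t + k + 0 * (th + z t) ^ 2) * xi t)).
  { intros t; unfold xi, z; pose proof (exp_pos (t + - T)); auto_derive; [nra|].
    unfold Rminus; field; nra. }
  assert (Hz : forall t, is_derive z t (xi t ^ 2)).
  { intros t; unfold xi, z; pose proof (exp_pos (t + - T)); auto_derive; [nra|].
    unfold Rminus; field; nra. }
  assert (Hsol : is_sol th k 0 xi z).
  { apply is_sol_intro; [intros t _; apply Hxi|intros t _; apply Hz| |];
      apply continuity_pt_right_cont0.
    - exact (is_derive_continuity_pt _ _ _ (Hxi 0)).
    - exact (is_derive_continuity_pt _ _ _ (Hz 0)). }
  assert (Hinit : nrm2 (xi 0) (z 0) <= sqrt (1 + (k + 1) ^ 2)).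
  { apply sqrt_le_1_alt; pose proof (exp_pos (0 - T)) as Hx; set (x := exp (0 - T)) in *.
    set (w := (x ^ 2 - 1) / (x ^ 2 + 1)).
    assert (Hw : 0 < w + 1).
    { replace (w + 1) with (2 * x ^ 2 / (x ^ 2 + 1)) by (unfold w; field; nra).
      apply Rdiv_lt_0_compat; nra. }
    assert (xi 0 ^ 2 + w ^ 2 = 1) by (unfold xi, w; fold x; field; nra).
    change (z 0) with (w - k); nra. }
  specialize (Hunif xi z Hsol Hinit T (Rle_refl T)).
  unfold xi in Hunif; rewrite Rminus_eq_0, exp_0 in Hunif.
  replace (2 * 1 / (1 ^ 2 + 1)) with 1 in Hunif by field; rewrite Rabs_R1 in Hunif; lra.
Qed.

Theorem mainTheorem8 (theta k sigma : R) (hk : 0 < k) (hs : 0 <= sigma) :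
  forward_complete theta k sigma /\
  lagrange_stable theta k sigma /\
  lyapunov_stable theta k sigma /\
  (forall z0, is_equilibrium theta k sigma 0 z0) /\
  GAOS theta k sigma /\
  (sigma = 0 ->
     ~ (exists T, 0 < T /\
          forall xi z, is_sol theta k sigma xi z ->
            nrm2 (xi 0) (z 0) <= sqrt (1 + (k + 1) ^ 2) ->
            forall t, T <= t -> Rabs (xi t) <= 1 / 2)).
Proof.
  split; [exact (sys_forward_complete theta k sigma hk hs)|].
  split; [exact (sys_lagrange_stable theta k sigma hk hs)|].
  split; [exact (sys_lyapunov_stable theta k sigma hk hs)|].
  split; [exact (sys_equilibrium theta k sigma)|].
  split; [split; [exact (sys_output_stable theta k sigma hk hs)|
                  exact (sys_output_attractive theta k sigma hk hs)]|].
  intros ->; exact (not_uniformly_output_attractive theta k hk).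
Qed.
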